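(* Let $d\ge1$ and $N>0$. For $\rho_z>0$ let $$G_{\rho_z}(r)=1-\frac1N\left(\frac{\rho_z}{r}\right)^{d/2}J_{d/2}(2\pi\rho_z r),\qquad r>0,$$ be the pair correlation function of a step blue noise pattern of $N$ samples in $d$ dimensions with zero region $\rho_z$. Call $\rho_z$ realizable if $G_{\rho_z}(r)\ge0$ for all $r>0$. Then the maximum realizable zero region is $$\rho_z^*=\left(\frac{N\,\Gamma\!\left(1+\frac d2\right)}{\pi^{d/2}}\right)^{1/d},$$ i.e. the inverse of the $d$-th root of the volume of a $d$-dimensional ball of radius $N^{-1/d}$. Equivalently, the minimum number of samples needed to realize a step blue noise pattern with zero region $\rho_z$ is $N=\pi^{d/2}\rho_z^d/\Gamma(1+d/2)$.
   Context: A step blue noise pattern with zero region $\rho_z$ is a sampling pattern whose radial power spectrum is $0$ for frequencies $\rho\le\rho_z$ and $1$ for $\rho>\rho_z$ (so its power spectrum is automatically nonnegative); its pair correlation function is the $G_{\rho_z}$ given in the claim. $J_{d/2}$ denotes the Bessel function of the first kind of order $d/2$ and $\Gamma$ the gamma function. Realizability of a sampling pattern requires nonnegativity of its power spectrum and of its pair correlation function. *)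

From Stdlib Require Import Reals Factorial.
From Coquelicot Require Import Coquelicot.
Open Scope R_scope.

Definition Gamma (s : R) : R :=
  RInt_gen (fun t => Rpower t (s - 1) * exp (- t)) (at_right 0) (Rbar_locally p_infty).

Definition BesselJ (nu x : R) : R :=
  Series (fun m : nat =>
    (-1) ^ m / (INR (fact m) * Gamma (INR m + nu + 1)) * Rpower (x / 2) (2 * INR m + nu)).

Definition G_step (d : nat) (N rho_z r : R) : R :=
  1 - / N * Rpower (rho_z / r) (INR d / 2) * BesselJ (INR d / 2) (2 * PI * rho_z * r).

Definition realizable (d : nat) (N rho_z : R) : Prop :=
  0 < rho_z /\ forall r : R, 0 < r -> 0 <= G_step d N rho_z r.

Definition rho_star (d : nat) (N : R) : R :=
  Rpower (N * Gamma (1 + INR d / 2) / Rpower PI (INR d / 2)) (/ INR d).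

Definition N_min (d : nat) (rho_z : R) : R :=
  Rpower PI (INR d / 2) * rho_z ^ d / Gamma (1 + INR d / 2).

From Stdlib Require Import Reals Lra Lia Factorial.
From Coquelicot Require Import Coquelicot.
Open Scope R_scope.

(* Write nu = d/2 and h(y) = sum_m (-1)^m y^m / (m! Gamma(m + nu + 1)), so that
   J_nu(x) = (x/2)^nu h((x/2)^2) and
     G_{rho_z}(r) = 1 - (N_min(rho_z) / N) * Gamma(1 + nu) h((pi rho_z r)^2),
   with Gamma(1 + nu) h(0) = 1.  The series h solves y h'' + (nu + 1) h' + h = 0, so the
   energy h^2 + y h'^2 has derivative -(2 nu + 1) h'^2 <= 0 on y >= 0; hence h(y) <= h(0)
   there.  Thus G_{rho_z} is bounded below by its limit 1 - N_min(rho_z) / N at r = 0+,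
   and rho_z is realizable iff N_min(rho_z) <= N.  Since N_min is increasing in rho_z and
   N_min(rho_star) = N, both claims follow. *)

Lemma filterlim_abs_le_0 {T} (F : (T -> Prop) -> Prop) {FF : Filter F} (f g : T -> R) :
  F (fun x => Rabs (f x) <= g x) -> filterlim g F (locally 0) ->
  filterlim f F (locally 0).
Proof.
  intros Hfg Hg.
  apply (filterlim_le_le (fun x => - g x) f g 0).
  - apply (filter_imp (fun x => Rabs (f x) <= g x)); auto.
    intros x Hx. pose proof (Rle_abs (f x)). pose proof (Rle_abs (- f x)).
    rewrite Rabs_Ropp in *. lra.
  - rewrite <- Ropp_0. exact (filterlim_comp _ _ _ g Ropp F (locally 0) _ Hg (filterlim_opp 0)).
  - exact Hg.
Qed.

Lemma filterlim_Rpower_at_right_0 (s : R) : 0 < s ->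
  filterlim (fun t => Rpower t s) (at_right 0) (locally 0).
Proof.
  intros Hs. unfold Rpower.
  apply (filterlim_comp _ _ _ (fun t => s * ln t) exp _ (Rbar_locally m_infty)).
  - replace m_infty with (Rbar_mult s m_infty)
      by (apply is_Rbar_mult_unique, is_Rbar_mult_sym, is_Rbar_mult_m_infty_pos; exact Hs).
    apply (filterlim_comp _ _ _ ln (Rmult s) _ (Rbar_locally m_infty)).
    + exact is_lim_ln_0.
    + apply filterlim_Rbar_mult_l.
  - exact is_lim_exp_m.
Qed.

Lemma filterlim_div_p_infty (C : R) :
  filterlim (fun t => C / t) (Rbar_locally p_infty) (locally 0).
Proof.
  assert (Hinv : is_lim (fun t => / t) p_infty 0)
    by (apply (is_lim_inv (fun t => t) p_infty p_infty); [apply is_lim_id | discriminate]).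
  apply (is_lim_scal_l _ C) in Hinv. simpl in Hinv. rewrite Rmult_0_r in Hinv.
  exact Hinv.
Qed.

Lemma ex_filterlim_of_dominated_increments (F : (R -> Prop) -> Prop) {FF : ProperFilter F}
    (f H : R -> R) (Q : R -> Prop) (L : R) :
  filterlim H F (locally L) -> F Q ->
  (forall x y, Q x -> Q y -> x <= y -> 0 <= f y - f x <= H y - H x) ->
  exists l, filterlim f F (locally l).
Proof.
  intros HL HQ Hincr.
  apply (filterlim_locally_cauchy (U := R_CompleteSpace)). intros eps.
  assert (He : 0 < eps / 2) by (destruct eps; simpl; lra).
  apply filterlim_locally with (eps := mkposreal _ He) in HL.
  exists (fun x => Q x /\ ball L (mkposreal _ He) (H x)). split.
  - now apply filter_and.
  - intros u v [Qu Hu] [Qv Hv].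
    change (Rabs (H u - L) < eps / 2) in Hu. change (Rabs (H v - L) < eps / 2) in Hv.
    change (Rabs (f v - f u) < eps).
    apply Rabs_def2 in Hu. apply Rabs_def2 in Hv.
    destruct (Rle_lt_dec u v) as [Huv | Hvu];
      [specialize (Hincr u v Qu Qv Huv) | specialize (Hincr v u Qv Qu (Rlt_le _ _ Hvu))];
      apply Rabs_def1; lra.
Qed.

Lemma RInt_le_increment (g u H : R -> R) (a b : R) : a <= b ->
  (forall t, a <= t <= b -> continuous g t) ->
  (forall t, a <= t <= b -> is_derive H t (u t) /\ continuous u t) ->
  (forall t, a <= t <= b -> 0 <= g t <= u t) ->
  0 <= RInt g a b <= H b - H a.
Proof.
  intros Hab Hg Hu Hgu.
  assert (Hig : ex_RInt g a b).
  { apply (ex_RInt_continuous (V := R_CompleteNormedModule)).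
    rewrite Rmin_left, Rmax_right by exact Hab. exact Hg. }
  assert (Hiu : is_RInt u a b (minus (H b) (H a))).
  { apply (is_RInt_derive (V := R_CompleteNormedModule));
      rewrite Rmin_left, Rmax_right by exact Hab; intros t Ht; apply Hu, Ht. }
  split.
  - apply RInt_ge_0; auto. intros t Ht. apply Hgu. lra.
  - apply (is_RInt_le g u a b); auto.
    + now apply (RInt_correct (V := R_CompleteNormedModule)).
    + intros t Ht. apply Hgu. lra.
Qed.

Lemma locally_gt_0 (x : R) : 0 < x -> locally x (fun y => 0 < y).
Proof.
  intros Hx. assert (Hx2 : 0 < x / 2) by lra.
  exists (mkposreal _ Hx2). intros y Hy.
  change (Rabs (y - x) < x / 2) in Hy. apply Rabs_def2 in Hy. lra.
Qed.

Lemma filter_prod_between_pos (P : R -> Prop) :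
  (forall x, 0 < x -> P x) ->
  filter_prod (at_right 0) (Rbar_locally p_infty)
    (fun ab => forall x, Rmin (fst ab) (snd ab) <= x <= Rmax (fst ab) (snd ab) -> P x).
Proof.
  intros HP. apply Filter_prod with (fun a => 0 < a) (fun b => 0 < b).
  - exists (mkposreal 1 Rlt_0_1). now intros y _ Hy.
  - now exists 0.
  - intros a b Ha Hb x [Hx _]. simpl in Hx.
    apply HP. pose proof (Rmin_pos a b Ha Hb). lra.
Qed.

Lemma is_RInt_gen_derive_pos (f df : R -> R) (la lb : R) :
  (forall x, 0 < x -> is_derive f x (df x)) ->
  (forall x, 0 < x -> continuous df x) ->
  filterlim f (at_right 0) (locally la) ->
  filterlim f (Rbar_locally p_infty) (locally lb) ->
  is_RInt_gen df (at_right 0) (Rbar_locally p_infty) (lb - la).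
Proof.
  intros Hd Hc Hla Hlb.
  apply is_RInt_gen_ext with (Derive f).
  - eapply filter_imp; [| apply (filter_prod_between_pos (fun x => Derive f x = df x))].
    + intros ab H x Hx. apply H. lra.
    + intros x Hx. now apply is_derive_unique, Hd.
  - apply is_RInt_gen_Derive; auto.
    + apply filter_prod_between_pos. intros x Hx. eexists. now apply Hd.
    + apply filter_prod_between_pos. intros x Hx.
      apply continuous_ext_loc with df; auto.
      apply (filter_imp (fun y => 0 < y)); [| now apply locally_gt_0].
      intros y Hy. symmetry. now apply is_derive_unique, Hd.
Qed.

Definition gamma_integrand (s t : R) : R := Rpower t (s - 1) * exp (- t).

Definition gamma_primitive (s x : R) : R := RInt (gamma_integrand s) 1 x.

Lemma gamma_integrand_gt_0 (s t : R) : 0 < gamma_integrand s t.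
Proof. apply Rmult_lt_0_compat; apply exp_pos. Qed.

Lemma continuous_gamma_integrand (s t : R) : 0 < t -> continuous (gamma_integrand s) t.
Proof.
  intros Ht. apply (ex_derive_continuous (K := R_AbsRing) (V := R_NormedModule)).
  unfold gamma_integrand, Rpower. auto_derive. exact Ht.
Qed.

Lemma ex_RInt_gamma_integrand (s a b : R) : 0 < a -> 0 < b -> ex_RInt (gamma_integrand s) a b.
Proof.
  intros Ha Hb. apply (ex_RInt_continuous (V := R_CompleteNormedModule)).
  intros t Ht. apply continuous_gamma_integrand. pose proof (Rmin_pos a b Ha Hb). lra.
Qed.

Lemma gamma_primitive_sub (s a b : R) : 0 < a -> 0 < b ->
  gamma_primitive s b - gamma_primitive s a = RInt (gamma_integrand s) a b.
Proof.
  intros Ha Hb. unfold gamma_primitive.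
  rewrite <- (RInt_Chasles (V := R_CompleteNormedModule) (gamma_integrand s) 1 a b)
    by (apply ex_RInt_gamma_integrand; lra).
  unfold plus; simpl. ring.
Qed.

Lemma is_derive_gamma_primitive (s x : R) : 0 < x ->
  is_derive (gamma_primitive s) x (gamma_integrand s x).
Proof.
  intros Hx.
  apply (is_derive_RInt (V := R_CompleteNormedModule) _ (gamma_primitive s) 1 x).
  - apply (filter_imp (fun y => 0 < y)); [| now apply locally_gt_0].
    intros y Hy. apply (RInt_correct (V := R_CompleteNormedModule)).
    apply ex_RInt_gamma_integrand; lra.
  - now apply continuous_gamma_integrand.
Qed.

Lemma pow_le_exp (t : R) (n : nat) : 0 <= t -> (1 <= n)%nat -> t ^ n <= INR n ^ n * exp t.
Proof.
  intros Ht Hn.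
  assert (Hn' : 0 < INR n) by (apply lt_0_INR; lia).
  assert (Hpow : (t / INR n) ^ n <= exp (t / INR n) ^ n).
  { apply pow_incr. split; [apply Rdiv_le_0_compat; lra |].
    pose proof (exp_ineq1_le (t / INR n)). lra. }
  rewrite <- (Rpower_pow n (exp _)) in Hpow by apply exp_pos. unfold Rpower in Hpow.
  rewrite ln_exp in Hpow. replace (INR n * (t / INR n)) with t in Hpow by (field; lra).
  replace (t ^ n) with (INR n ^ n * (t / INR n) ^ n)
    by (rewrite <- Rpow_mult_distr; f_equal; field; lra).
  apply Rmult_le_compat_l; [apply pow_le; lra | exact Hpow].
Qed.

Lemma Rpower_exp_opp_le (s t : R) : 0 <= t -> Rpower t s * exp (- t) <= Rpower t s.
Proof.
  intros Ht. rewrite <- (Rmult_1_r (Rpower t s)) at 2.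
  apply Rmult_le_compat_l; [left; apply exp_pos |].
  rewrite <- exp_0. destruct Ht as [Ht | <-].
  - left. apply exp_increasing. lra.
  - right. f_equal. ring.
Qed.

Lemma Rpower_exp_tail (s : R) : exists C, forall t, 1 <= t -> Rpower t s * exp (- t) <= C / t.
Proof.
  destruct (INR_unbounded (Rmax (s + 1) 1)) as [n Hn].
  pose proof (Rmax_l (s + 1) 1). pose proof (Rmax_r (s + 1) 1).
  assert (Hn1 : (1 <= n)%nat) by (destruct n; [simpl in Hn; lra | lia]).
  exists (INR n ^ n). intros t Ht.
  assert (Hs : Rpower t s <= t ^ n / t).
  { replace (t ^ n / t) with (Rpower t (INR n - 1))
      by (unfold Rminus; rewrite Rpower_plus, Rpower_Ropp, Rpower_1, Rpower_pow by lra;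
          reflexivity).
    apply Rle_Rpower; lra. }
  assert (Hexp : exp t * exp (- t) = 1) by (rewrite <- exp_plus, Rplus_opp_r; apply exp_0).
  pose proof (pow_le_exp t n ltac:(lra) Hn1). pose proof (exp_pos (- t)).
  apply Rle_trans with (INR n ^ n * exp t / t * exp (- t)).
  - apply Rmult_le_compat_r; [lra |]. apply (Rle_trans _ _ _ Hs).
    apply Rmult_le_compat_r; [left; apply Rinv_0_lt_compat |]; lra.
  - right. replace (INR n ^ n * exp t / t * exp (- t))
      with (INR n ^ n / t * (exp t * exp (- t))) by (field; lra).
    rewrite Hexp. ring.
Qed.

Lemma ex_lim_gamma_primitive_at_right_0 (s : R) : 0 < s ->
  exists L, filterlim (gamma_primitive s) (at_right 0) (locally L).
Proof.
  intros Hs.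
  apply (ex_filterlim_of_dominated_increments _ _
           (fun t => / s * Rpower t s) (fun t => 0 < t < 1) 0).
  - replace (locally 0) with (locally (/ s * 0)) by (f_equal; ring).
    apply (filterlim_comp _ _ _ _ (Rmult (/ s)) _ (locally 0)).
    + now apply filterlim_Rpower_at_right_0.
    + apply (filterlim_Rbar_mult_l (/ s) 0).
  - exists (mkposreal 1 Rlt_0_1). intros y Hy Hy0.
    change (Rabs (y - 0) < 1) in Hy. apply Rabs_def2 in Hy. lra.
  - intros x y Hx Hy Hxy. rewrite gamma_primitive_sub by lra.
    apply (RInt_le_increment _ (fun t => Rpower t (s - 1)) (fun t => / s * Rpower t s));
      [exact Hxy | ..];
      intros t Ht; assert (Ht0 : 0 < t) by lra.
    + now apply continuous_gamma_integrand.
    + split.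
      * replace (Rpower t (s - 1)) with (/ s * (s * Rpower t (s - 1))) by (field; lra).
        now apply is_derive_scal, is_derive_Reals, derivable_pt_lim_power.
      * apply (ex_derive_continuous (K := R_AbsRing) (V := R_NormedModule)).
        eexists. now apply is_derive_Reals, derivable_pt_lim_power.
    + split; [left; apply gamma_integrand_gt_0 | apply Rpower_exp_opp_le; lra].
Qed.

Lemma ex_lim_gamma_primitive_p_infty (s : R) :
  exists L, filterlim (gamma_primitive s) (Rbar_locally p_infty) (locally L).
Proof.
  destruct (Rpower_exp_tail s) as [C HC].
  apply (ex_filterlim_of_dominated_increments _ _ (fun t => - C / t) (fun t => 1 < t) 0).
  - apply filterlim_div_p_infty.
  - now exists 1.
  - intros x y Hx Hy Hxy. rewrite gamma_primitive_sub by lra.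
    apply (RInt_le_increment _ (fun t => C / (t * t)) (fun t => - C / t));
      [exact Hxy | ..]; intros t Ht; assert (Ht1 : 1 < t) by lra.
    + apply continuous_gamma_integrand. lra.
    + split.
      * auto_derive; [lra | field; lra].
      * apply (ex_derive_continuous (K := R_AbsRing) (V := R_NormedModule)).
        auto_derive. nra.
    + split; [left; apply gamma_integrand_gt_0 |].
      unfold gamma_integrand, Rminus. rewrite Rpower_plus, Rpower_Ropp, Rpower_1 by lra.
      replace (C / (t * t)) with (C / t * / t) by (field; lra).
      replace (Rpower t s * / t * exp (- t)) with (Rpower t s * exp (- t) * / t) by ring.
      apply Rmult_le_compat_r; [left; apply Rinv_0_lt_compat; lra | apply HC; lra].
Qed.

Lemma gamma_primitive_le (s x y : R) : 0 < x <= y -> gamma_primitive s x <= gamma_primitive s y.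
Proof.
  intros Hxy.
  assert (Hsub := gamma_primitive_sub s x y ltac:(lra) ltac:(lra)).
  assert (0 <= RInt (gamma_integrand s) x y).
  { apply RInt_ge_0; [lra | apply ex_RInt_gamma_integrand; lra |].
    intros t _. left. apply gamma_integrand_gt_0. }
  lra.
Qed.

Lemma is_RInt_gen_gamma_integrand (s la lb : R) :
  filterlim (gamma_primitive s) (at_right 0) (locally la) ->
  filterlim (gamma_primitive s) (Rbar_locally p_infty) (locally lb) ->
  is_RInt_gen (gamma_integrand s) (at_right 0) (Rbar_locally p_infty) (lb - la).
Proof.
  apply is_RInt_gen_derive_pos.
  - apply is_derive_gamma_primitive.
  - apply continuous_gamma_integrand.
Qed.

Lemma Gamma_eq_lim_sub (s la lb : R) :
  filterlim (gamma_primitive s) (at_right 0) (locally la) ->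
  filterlim (gamma_primitive s) (Rbar_locally p_infty) (locally lb) ->
  Gamma s = lb - la.
Proof. intros Hla Hlb. now apply is_RInt_gen_unique, is_RInt_gen_gamma_integrand. Qed.

Lemma is_RInt_gen_Gamma (s : R) : 0 < s ->
  is_RInt_gen (gamma_integrand s) (at_right 0) (Rbar_locally p_infty) (Gamma s).
Proof.
  intros Hs.
  destruct (ex_lim_gamma_primitive_at_right_0 s Hs) as [la Hla].
  destruct (ex_lim_gamma_primitive_p_infty s) as [lb Hlb].
  rewrite (Gamma_eq_lim_sub s la lb) by assumption.
  now apply is_RInt_gen_gamma_integrand.
Qed.

Lemma Gamma_gt_0 (s : R) : 0 < s -> 0 < Gamma s.
Proof.
  intros Hs.
  destruct (ex_lim_gamma_primitive_at_right_0 s Hs) as [la Hla].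
  destruct (ex_lim_gamma_primitive_p_infty s) as [lb Hlb].
  rewrite (Gamma_eq_lim_sub s la lb) by assumption.
  assert (Hla0 : la <= 0).
  { apply (filterlim_le (F := at_right 0) (gamma_primitive s) (fun _ => 0) la 0);
      [| exact Hla | apply filterlim_const].
    exists (mkposreal 1 Rlt_0_1). intros y Hy Hy0.
    change (Rabs (y - 0) < 1) in Hy. apply Rabs_def2 in Hy.
    replace 0 with (gamma_primitive s 1) by apply (RInt_point (V := R_CompleteNormedModule)).
    apply gamma_primitive_le. lra. }
  assert (Hlb2 : gamma_primitive s 2 <= lb).
  { apply (filterlim_le (F := Rbar_locally p_infty) (fun _ => gamma_primitive s 2)
             (gamma_primitive s) (gamma_primitive s 2) lb);
      [| apply filterlim_const | exact Hlb].
    exists 2. intros x Hx. apply gamma_primitive_le. lra. }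
  assert (H2 : 0 < gamma_primitive s 2).
  { apply RInt_gt_0; [lra | intros; apply gamma_integrand_gt_0 |].
    intros x Hx. apply continuous_gamma_integrand. lra. }
  lra.
Qed.

Lemma filterlim_Rpower_exp_at_right_0 (s : R) : 0 < s ->
  filterlim (fun t => Rpower t s * exp (- t)) (at_right 0) (locally 0).
Proof.
  intros Hs. apply (filterlim_abs_le_0 _ _ (fun t => Rpower t s));
    [| now apply filterlim_Rpower_at_right_0].
  exists (mkposreal 1 Rlt_0_1). intros t _ Ht.
  rewrite Rabs_pos_eq by (left; apply Rmult_lt_0_compat; apply exp_pos).
  apply Rpower_exp_opp_le. lra.
Qed.

Lemma filterlim_Rpower_exp_p_infty (s : R) :
  filterlim (fun t => Rpower t s * exp (- t)) (Rbar_locally p_infty) (locally 0).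
Proof.
  destruct (Rpower_exp_tail s) as [C HC].
  apply (filterlim_abs_le_0 _ _ (fun t => C / t)); [| apply filterlim_div_p_infty].
  exists 1. intros t Ht.
  rewrite Rabs_pos_eq by (left; apply Rmult_lt_0_compat; apply exp_pos).
  apply HC. lra.
Qed.

Lemma Gamma_succ (s : R) : 0 < s -> Gamma (s + 1) = s * Gamma s.
Proof.
  intros Hs.
  set (df := fun t => s * gamma_integrand s t - gamma_integrand (s + 1) t).
  assert (Hdf : forall t, 0 < t -> is_derive (fun t => Rpower t s * exp (- t)) t (df t)).
  { intros t Ht. unfold df, gamma_integrand. replace (s + 1 - 1) with s by ring.
    unfold Rminus at 2. rewrite Rpower_plus, Rpower_Ropp, Rpower_1 by exact Ht.
    unfold Rpower. auto_derive; [exact Ht | field; lra]. }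
  assert (Hparts : is_RInt_gen df (at_right 0) (Rbar_locally p_infty) (0 - 0)).
  { apply (is_RInt_gen_derive_pos _ _ _ _ Hdf);
      [| now apply filterlim_Rpower_exp_at_right_0 | apply filterlim_Rpower_exp_p_infty].
    intros t Ht. apply (ex_derive_continuous (K := R_AbsRing) (V := R_NormedModule)).
    unfold df, gamma_integrand, Rpower. auto_derive. tauto. }
  assert (Hdiff := is_RInt_gen_minus _ _ _ _
                     (is_RInt_gen_scal _ s _ (is_RInt_gen_Gamma s Hs)) Hparts).
  transitivity (minus (scal s (Gamma s)) (0 - 0)).
  - apply is_RInt_gen_unique.
    refine (is_RInt_gen_ext _ _ _ (filter_forall _ _) Hdiff). intros ab x _.
    unfold df, gamma_integrand, minus, plus, opp, scal; simpl. unfold mult; simpl. ring.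
  - unfold minus, plus, opp, scal; simpl. unfold mult; simpl. ring.
Qed.

Lemma bessel_ode_sq_le (nu : R) (h h1 h2 : R -> R) : -1/2 <= nu ->
  (forall y, is_derive h y (h1 y)) -> (forall y, is_derive h1 y (h2 y)) ->
  (forall y, 0 <= y -> y * h2 y + (nu + 1) * h1 y + h y = 0) ->
  forall y, 0 <= y -> h y ^ 2 <= h 0 ^ 2.
Proof.
  intros Hnu Hh Hh1 Hode y Hy.
  set (E := fun t => h t ^ 2 + t * h1 t ^ 2).
  assert (HE : forall t, 0 <= t -> is_derive E t (- (2 * nu + 1) * h1 t ^ 2)).
  { intros t Ht. unfold E. auto_derive.
    - split; [eexists; apply Hh | split; [eexists; apply Hh1 | exact I]].
    - change (Derive (fun x => h x) t) with (Derive h t).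
      change (Derive (fun x => h1 x) t) with (Derive h1 t).
      rewrite (is_derive_unique h t (h1 t)), (is_derive_unique h1 t (h2 t)) by auto.
      transitivity (2 * h1 t * (t * h2 t + (nu + 1) * h1 t + h t) - (2 * nu + 1) * h1 t ^ 2);
        [ring | rewrite (Hode t Ht); ring]. }
  destruct (MVT_gen E 0 y (fun t => - (2 * nu + 1) * h1 t ^ 2)) as [c [Hc HEc]].
  - rewrite Rmin_left by exact Hy. intros t Ht. apply HE. lra.
  - rewrite Rmin_left by exact Hy. intros t Ht. apply continuity_pt_filterlim.
    apply (ex_derive_continuous (K := R_AbsRing) (V := R_NormedModule)).
    eexists. apply HE. lra.
  - assert (Hdecr : E y <= E 0).
    { assert (0 <= (2 * nu + 1) * h1 c ^ 2) by (apply Rmult_le_pos; [lra | apply pow2_ge_0]).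
      nra. }
    assert (0 <= y * h1 y ^ 2) by (apply Rmult_le_pos; [exact Hy | apply pow2_ge_0]).
    unfold E in Hdecr. lra.
Qed.

Definition bessel_coef (nu : R) (m : nat) : R :=
  (-1) ^ m / (INR (fact m) * Gamma (INR m + nu + 1)).

Definition bessel_series (nu : R) : R -> R := PSeries (bessel_coef nu).

Lemma BesselJ_eq (nu x : R) : 0 < x ->
  BesselJ nu x = Rpower (x / 2) nu * bessel_series nu ((x / 2) ^ 2).
Proof.
  intros Hx. unfold BesselJ, bessel_series, PSeries. rewrite <- Series_scal_l.
  apply Series_ext. intros m. unfold bessel_coef.
  rewrite Rpower_plus, <- pow_mult, <- (Rpower_pow (2 * m)) by lra.
  replace (INR (2 * m)) with (2 * INR m) by (rewrite mult_INR; reflexivity). ring.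
Qed.

Lemma bessel_series_0 (nu : R) : bessel_series nu 0 = / Gamma (nu + 1).
Proof.
  unfold bessel_series. rewrite PSeries_0. unfold bessel_coef. simpl.
  rewrite Rplus_0_l. unfold Rdiv. now rewrite !Rmult_1_l.
Qed.

Section BesselSeries.

Variable nu : R.
Hypothesis nu_gt_m1 : -1 < nu.

Lemma Gamma_bessel_gt_0 (m : nat) : 0 < Gamma (INR m + nu + 1).
Proof. apply Gamma_gt_0. pose proof (pos_INR m). lra. Qed.

Lemma bessel_coef_succ (m : nat) :
  (INR m + 1) * (INR m + nu + 1) * bessel_coef nu (S m) = - bessel_coef nu m.
Proof.
  unfold bessel_coef.
  replace (INR (S m) + nu + 1) with ((INR m + nu + 1) + 1) by (rewrite S_INR; ring).
  rewrite Gamma_succ by (pose proof (pos_INR m); lra).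
  rewrite fact_simpl, mult_INR, S_INR. simpl pow.
  pose proof (Gamma_bessel_gt_0 m). pose proof (INR_fact_lt_0 m). pose proof (pos_INR m).
  field. repeat split; lra.
Qed.

Lemma bessel_coef_neq_0 (m : nat) : bessel_coef nu m <> 0.
Proof.
  unfold bessel_coef. pose proof (Gamma_bessel_gt_0 m). pose proof (INR_fact_lt_0 m).
  apply Rmult_integral_contrapositive. split; [apply pow_nonzero; lra |].
  apply Rinv_neq_0_compat. apply Rgt_not_eq, Rmult_lt_0_compat; assumption.
Qed.

Lemma CV_radius_bessel_coef : CV_radius (bessel_coef nu) = p_infty.
Proof.
  apply CV_radius_infinite_DAlembert; [exact bessel_coef_neq_0 |].
  apply is_lim_seq_ext with (fun n => / ((INR n + 1) * (INR n + nu + 1))).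
  - intros n. pose proof (pos_INR n).
    assert (HP : 0 < (INR n + 1) * (INR n + nu + 1)) by (apply Rmult_lt_0_compat; lra).
    pose proof (bessel_coef_neq_0 n).
    replace (bessel_coef nu (S n)) with (- bessel_coef nu n / ((INR n + 1) * (INR n + nu + 1)))
      by (rewrite <- bessel_coef_succ; field; lra).
    replace (- bessel_coef nu n / ((INR n + 1) * (INR n + nu + 1)) / bessel_coef nu n)
      with (- / ((INR n + 1) * (INR n + nu + 1))) by (field; lra).
    rewrite Rabs_Ropp, Rabs_pos_eq; [reflexivity | left; now apply Rinv_0_lt_compat].
  - apply (is_lim_seq_inv _ p_infty); [| discriminate].
    apply (is_lim_seq_le_p_loc INR); [| exact is_lim_seq_INR].
    apply filter_forall. intros n. pose proof (pos_INR n). nra.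
Qed.

Lemma CV_radius_iter_PS_derive_bessel_coef (k : nat) :
  CV_radius (Nat.iter k PS_derive (bessel_coef nu)) = p_infty.
Proof.
  induction k as [| k IHk]; simpl; [exact CV_radius_bessel_coef |].
  now rewrite CV_radius_derive.
Qed.

Lemma ex_pseries_iter_PS_derive_bessel_coef (k : nat) (y : R) :
  ex_pseries (Nat.iter k PS_derive (bessel_coef nu)) y.
Proof. apply CV_radius_inside. now rewrite CV_radius_iter_PS_derive_bessel_coef. Qed.

Lemma is_derive_iter_PS_derive_bessel_coef (k : nat) (y : R) :
  is_derive (PSeries (Nat.iter k PS_derive (bessel_coef nu))) y
    (PSeries (Nat.iter (S k) PS_derive (bessel_coef nu)) y).
Proof. apply is_derive_PSeries. now rewrite CV_radius_iter_PS_derive_bessel_coef. Qed.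

Lemma bessel_series_ode (y : R) :
  y * PSeries (PS_derive (PS_derive (bessel_coef nu))) y
  + (nu + 1) * PSeries (PS_derive (bessel_coef nu)) y + bessel_series nu y = 0.
Proof.
  unfold bessel_series.
  rewrite <- PSeries_incr_1, <- PSeries_scal, <- !PSeries_plus, <- (PSeries_const_0 y).
  - apply PSeries_ext. intros [| n];
      unfold PS_plus, PS_scal, PS_incr_1, PS_derive, plus, scal, zero; cbn -[INR];
      unfold mult; cbn -[INR];
      [pose proof (bessel_coef_succ 0) | pose proof (bessel_coef_succ (S n))];
      rewrite ?S_INR, ?INR_0 in *; nra.
  - apply ex_pseries_plus.
    + apply ex_pseries_incr_1, (ex_pseries_iter_PS_derive_bessel_coef 2).
    + apply ex_pseries_scal; [apply Rmult_comm | apply (ex_pseries_iter_PS_derive_bessel_coef 1)].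
  - apply (ex_pseries_iter_PS_derive_bessel_coef 0).
  - apply ex_pseries_incr_1, (ex_pseries_iter_PS_derive_bessel_coef 2).
  - apply ex_pseries_scal; [apply Rmult_comm | apply (ex_pseries_iter_PS_derive_bessel_coef 1)].
Qed.

Lemma continuous_bessel_series (y : R) : continuous (bessel_series nu) y.
Proof.
  apply (ex_derive_continuous (K := R_AbsRing) (V := R_NormedModule)).
  eexists. apply (is_derive_iter_PS_derive_bessel_coef 0).
Qed.

Lemma bessel_series_le_bessel_series_0 (y : R) : -1/2 <= nu -> 0 <= y ->
  bessel_series nu y <= bessel_series nu 0.
Proof.
  intros Hnu Hy.
  assert (Hsq := bessel_ode_sq_le nu (bessel_series nu) _ _ Hnu
                   (is_derive_iter_PS_derive_bessel_coef 0)
                   (is_derive_iter_PS_derive_bessel_coef 1)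
                   (fun y _ => bessel_series_ode y) y Hy).
  assert (H0 : 0 < bessel_series nu 0).
  { rewrite bessel_series_0. apply Rinv_0_lt_compat, Gamma_gt_0. lra. }
  nra.
Qed.

End BesselSeries.

Lemma Rpow_le_iff (x y : R) (n : nat) : (1 <= n)%nat -> 0 < x -> 0 < y ->
  x ^ n <= y ^ n <-> x <= y.
Proof.
  intros Hn Hx Hy. split; [| intros Hxy; apply pow_incr; lra].
  intros Hpow. destruct (Rle_lt_dec x y) as [Hxy | Hyx]; [exact Hxy | exfalso].
  assert (Hlt : Rpower y (INR n) < Rpower x (INR n))
    by (apply Rlt_Rpower_l; [apply lt_0_INR; lia | lra]).
  rewrite !Rpower_pow in Hlt by assumption. lra.
Qed.

Lemma Gamma_half_dim_gt_0 (d : nat) : 0 < Gamma (1 + INR d / 2).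
Proof. apply Gamma_gt_0. pose proof (pos_INR d). lra. Qed.

Lemma G_step_eq (d : nat) (N rho r : R) : 0 < rho -> 0 < r ->
  G_step d N rho r =
  1 - N_min d rho / N
      * (Gamma (1 + INR d / 2) * bessel_series (INR d / 2) ((PI * rho * r) ^ 2)).
Proof.
  intros Hrho Hr. pose proof PI_RGT_0. pose proof (Gamma_half_dim_gt_0 d).
  assert (Hx : 0 < PI * rho * r) by (apply Rmult_lt_0_compat; nra).
  unfold G_step, N_min.
  rewrite BesselJ_eq by lra.
  replace (2 * PI * rho * r / 2) with (PI * rho * r) by field.
  assert (Hpow : Rpower (rho / r) (INR d / 2) * Rpower (PI * rho * r) (INR d / 2)
                 = Rpower PI (INR d / 2) * rho ^ d).
  { rewrite Rpower_mult_distr by (try apply Rdiv_lt_0_compat; lra).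
    replace (rho / r * (PI * rho * r)) with (PI * rho ^ 2) by (field; lra).
    rewrite <- Rpower_mult_distr, <- (Rpower_pow 2 rho), Rpower_mult by nra.
    replace (INR 2 * (INR d / 2)) with (INR d) by (simpl; field).
    now rewrite Rpower_pow. }
  rewrite <- Hpow.
  set (G := Gamma (1 + INR d / 2)). set (h := bessel_series (INR d / 2) ((PI * rho * r) ^ 2)).
  set (A := Rpower (rho / r) (INR d / 2)). set (B := Rpower (PI * rho * r) (INR d / 2)).
  replace (A * B / G / N * (G * h)) with (/ N * A * (B * h) * (G * / G)) by (unfold Rdiv; ring).
  rewrite Rinv_r by (unfold G; lra). ring.
Qed.

Lemma filterlim_G_step_at_right_0 (d : nat) (N rho : R) : 0 < rho ->
  filterlim (G_step d N rho) (at_right 0) (locally (1 - N_min d rho / N)).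
Proof.
  intros Hrho. pose proof (Gamma_half_dim_gt_0 d) as HG.
  set (nu := INR d / 2). set (K := N_min d rho / N).
  apply (filterlim_ext_loc (F := at_right 0)
           (fun r => 1 - K * (Gamma (1 + nu) * bessel_series nu ((PI * rho * r) ^ 2)))).
  - exists (mkposreal 1 Rlt_0_1). intros r _ Hr. symmetry. now apply G_step_eq.
  - apply (filterlim_comp _ _ _ (fun r => bessel_series nu ((PI * rho * r) ^ 2))
             (fun z => 1 - K * (Gamma (1 + nu) * z)) _ (locally (bessel_series nu 0))).
    + apply (filterlim_filter_le_1 (F := locally 0)); [apply filter_le_within |].
      apply (filterlim_comp _ _ _ (fun r => (PI * rho * r) ^ 2) (bessel_series nu) _ (locally 0)).
      * replace 0 with ((PI * rho * 0) ^ 2) at 2 by ring.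
        apply (ex_derive_continuous (K := R_AbsRing) (V := R_NormedModule)). auto_derive. exact I.
      * apply continuous_bessel_series. unfold nu. pose proof (pos_INR d). lra.
    + replace (1 - K) with (1 - K * (Gamma (1 + nu) * bessel_series nu 0)).
      * apply (ex_derive_continuous (K := R_AbsRing) (V := R_NormedModule)
                 (fun z => 1 - K * (Gamma (1 + nu) * z))).
        auto_derive. exact I.
      * rewrite bessel_series_0, (Rplus_comm nu 1), Rinv_r by (unfold nu; lra). ring.
Qed.

Lemma N_min_gt_0 (d : nat) (rho : R) : 0 < rho -> 0 < N_min d rho.
Proof.
  intros Hrho. apply Rdiv_lt_0_compat; [| apply Gamma_half_dim_gt_0].
  apply Rmult_lt_0_compat; [apply exp_pos | now apply pow_lt].
Qed.

Lemma realizable_iff_N_min_le (d : nat) (N rho : R) : 0 < N -> 0 < rho ->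
  realizable d N rho <-> N_min d rho <= N.
Proof.
  intros HN Hrho. pose proof (Gamma_half_dim_gt_0 d) as HG. pose proof (N_min_gt_0 d rho Hrho).
  assert (Hnu : -1/2 <= INR d / 2) by (pose proof (pos_INR d); lra).
  split.
  - intros [_ Hreal].
    assert (Hlim : 0 <= 1 - N_min d rho / N).
    { apply (filterlim_le (F := at_right 0) (fun _ => 0) (G_step d N rho)
               0 (1 - N_min d rho / N));
        [| apply filterlim_const | now apply filterlim_G_step_at_right_0].
      exists (mkposreal 1 Rlt_0_1). intros r _ Hr. now apply Hreal. }
    apply Rmult_le_reg_r with (/ N); [now apply Rinv_0_lt_compat |].
    rewrite Rinv_r by lra. unfold Rdiv in Hlim. lra.
  - intros Hle. split; [exact Hrho |]. intros r Hr. rewrite G_step_eq by assumption.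
    assert (Hprofile :
      Gamma (1 + INR d / 2) * bessel_series (INR d / 2) ((PI * rho * r) ^ 2) <= 1).
    { apply Rle_trans with (Gamma (1 + INR d / 2) * bessel_series (INR d / 2) 0).
      - apply Rmult_le_compat_l; [lra |].
        apply bessel_series_le_bessel_series_0; [lra | exact Hnu | apply pow2_ge_0].
      - rewrite bessel_series_0, (Rplus_comm (INR d / 2) 1), Rinv_r; lra. }
    assert (HK : 0 <= N_min d rho / N <= 1).
    { split; [apply Rdiv_le_0_compat; lra |].
      apply Rmult_le_reg_r with N; [exact HN |]. unfold Rdiv.
      rewrite Rmult_assoc, Rinv_l by lra. lra. }
    nra.
Qed.

Lemma rho_star_pow (d : nat) (N : R) : (1 <= d)%nat -> 0 < N ->
  rho_star d N ^ d = N * Gamma (1 + INR d / 2) / Rpower PI (INR d / 2).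
Proof.
  intros Hd HN. assert (Hd' : 0 < INR d) by (apply lt_0_INR; lia).
  assert (HB : 0 < N * Gamma (1 + INR d / 2) / Rpower PI (INR d / 2)).
  { apply Rdiv_lt_0_compat; [apply Rmult_lt_0_compat; [exact HN | apply Gamma_half_dim_gt_0] |].
    apply exp_pos. }
  unfold rho_star. rewrite <- Rpower_pow by apply exp_pos.
  now rewrite Rpower_mult, Rinv_l, Rpower_1 by lra.
Qed.

Lemma N_min_rho_star (d : nat) (N : R) : (1 <= d)%nat -> 0 < N -> N_min d (rho_star d N) = N.
Proof.
  intros Hd HN. pose proof (Gamma_half_dim_gt_0 d). pose proof (exp_pos (INR d / 2 * ln PI)).
  unfold N_min. rewrite rho_star_pow by assumption. unfold Rpower. field. lra.
Qed.

Lemma N_min_le_iff (d : nat) (rho rho' : R) : (1 <= d)%nat -> 0 < rho -> 0 < rho' ->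
  N_min d rho <= N_min d rho' <-> rho <= rho'.
Proof.
  intros Hd Hrho Hrho'. rewrite <- (Rpow_le_iff rho rho' d) by assumption.
  pose proof (Gamma_half_dim_gt_0 d). pose proof (exp_pos (INR d / 2 * ln PI)).
  unfold N_min, Rpower. split; intros Hle.
  - apply Rmult_le_reg_l with (exp (INR d / 2 * ln PI) / Gamma (1 + INR d / 2)).
    + now apply Rdiv_lt_0_compat.
    + unfold Rdiv in *. lra.
  - unfold Rdiv. apply Rmult_le_compat_r; [left; now apply Rinv_0_lt_compat |].
    apply Rmult_le_compat_l; lra.
Qed.

Theorem lemma5 (d : nat) (Hd : (1 <= d)%nat) :
  (forall N : R, 0 < N ->
     realizable d N (rho_star d N) /\
     (forall rho_z : R, realizable d N rho_z -> rho_z <= rho_star d N))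
  /\
  (forall rho_z : R, 0 < rho_z ->
     realizable d (N_min d rho_z) rho_z /\
     (forall N : R, 0 < N -> realizable d N rho_z -> N_min d rho_z <= N)).
Proof.
  split.
  - intros N HN.
    assert (Hstar : 0 < rho_star d N) by apply exp_pos.
    split.
    + apply realizable_iff_N_min_le; [exact HN | exact Hstar |].
      rewrite N_min_rho_star by assumption. apply Rle_refl.
    + intros rho Hreal. pose proof (proj1 Hreal) as Hrho.
      apply realizable_iff_N_min_le in Hreal; [| exact HN | exact Hrho].
      apply (N_min_le_iff d); [exact Hd | exact Hrho | exact Hstar |].
      now rewrite N_min_rho_star.
  - intros rho Hrho. pose proof (N_min_gt_0 d rho Hrho).
    split.
    + apply realizable_iff_N_min_le; [assumption | assumption | apply Rle_refl].
    + intros N HN Hreal. now apply realizable_iff_N_min_le in Hreal.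
Qed.
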